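(* Let $Q$ be a Boolean CQ as below with query graph $G$, let $I$ be an instance, let $R\in E^i$ and $v\in u_R^{+,R}\cap v_R^{\oplus}$. Let $P$ be a directed path from $u_R$ to $v$ whose first edge is $e_R$ and whose remaining part is a directed path from $v_R$ to $v$ consisting only of consistent edges. If there exist $(a,b_1),(a,b_2)\in\Pi_{u_R,v}(P^f(I))$ with $b_1\ne b_2$, then for no frugal repair $r$ of $I$ for $Q$ is there a tuple $t\in Q^f(r)$ with $t[u_R]=a$.
   Context: $Q$ is a Boolean conjunctive query without self-joins with atoms $R(u,v)$, $u\neq v$ variables, first attribute the key; relations are of consistent or inconsistent type. Query graph $G$: vertices are variables, one edge $e_R=(u_R,v_R)$ per atom, $E^i$ the inconsistent edges. $x\to y$: directed path (possibly empty) with only consistent edges; $u^{\oplus}=\{v:u\to v\}$; $u^{+,R}$ is the set of vertices reachable from $u$ by a directed path in $G$ with the edge $e_R$ removed. For a path $P$ (a set of atoms of $Q$), $P^f(I)$ is the set of satisfying valuations of the variables of $P$ in $I$, and $\Pi_{u_R,v}$ projects onto the variables $u_R,v$. A repair is a maximal subset of $I$ satisfying all key constraints; $Q^f(r)$ is the set of satisfying valuations of $Q$ in $r$, with $t[x]$ the value of variable $x$; a repair $r$ is frugal if no repair $r'$ has $Q^f(r')\subsetneq Q^f(r)$. *)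

From Stdlib Require Import List.
Import ListNotations.
Set Implicit Arguments.

(* An instance over relation symbols Rel and constants D:
   J R a b  means the fact R(a,b) is in J (first attribute = key). *)
Definition instance (Rel D : Type) := Rel -> D -> D -> Prop.

Definition key_consistent {Rel D : Type} (J : instance Rel D) (R : Rel) : Prop :=
  forall a b b', J R a b -> J R a b' -> b = b'.

Definition consistent_inst {Rel D : Type} (J : instance Rel D) : Prop :=
  forall R, key_consistent J R.

Definition sub_inst {Rel D : Type} (J1 J2 : instance Rel D) : Prop :=
  forall R a b, J1 R a b -> J2 R a b.

Definition finite_inst {Rel D : Type} (J : instance Rel D) : Prop :=
  exists l : list (Rel * D * D), forall R a b, J R a b -> In (R, a, b) l.

Definition is_repair {Rel D : Type} (I r : instance Rel D) : Prop :=
  sub_inst r I /\ consistent_inst r /\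
  (forall r', sub_inst r r' -> sub_inst r' I -> consistent_inst r' -> sub_inst r' r).

(* Q^f(J): satisfying valuations of the query whose atoms are R(u R, v R) *)
Definition Qf {Rel V D : Type} (u v : Rel -> V) (J : instance Rel D) (t : V -> D) : Prop :=
  forall R, J R (t (u R)) (t (v R)).

Definition frugal {Rel V D : Type} (u v : Rel -> V) (I r : instance Rel D) : Prop :=
  is_repair I r /\
  ~ (exists r', is_repair I r' /\
        (forall t, Qf u v r' t -> Qf u v r t) /\
        (exists t, Qf u v r t /\ ~ Qf u v r' t)).

(* dpath u v x y p : the list of atoms p forms a directed walk from x to y
   in the query graph (edge e_S goes from u S to v S); [] is the empty path. *)
Fixpoint dpath {Rel V : Type} (u v : Rel -> V) (x y : V) (p : list Rel) : Prop :=
  match p with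
  | [] => x = y
  | e :: p' => u e = x /\ dpath u v (v e) y p'
  end.

(* (a,b) in Pi_{x,y}(P^f(I)) where P is the set of atoms listed in P *)
Definition proj_Pf {Rel V D : Type} (u v : Rel -> V) (P : list Rel)
    (I : instance Rel D) (x y : V) (a b : D) : Prop :=
  exists t : V -> D,
    (forall S, In S P -> I S (t (u S)) (t (v S))) /\ t x = a /\ t y = b.

From Stdlib Require Import List Classical.
Import ListNotations.

(* Suppose r is a frugal repair and t ∈ Q^f(r) with
   t[u_R] = a, so r contains R(a,c) for c = t[v_R].  Among the two P-witnesses
   ending in b1 ≠ b2 one, ti, satisfies ti[w] ≠ t[w]; let c' = ti[v_R].
   Consistent atoms are functional, so values propagate along the consistent
   path Ps from v_R to w.  Swapping R(a,c) for R(a,c') in r gives another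
   repair r'.  Every t' ∈ Q^f(r') lies in Q^f(r): if t'[u_R] ≠ a then r
   and r' agree on the atoms t' uses; if t'[u_R] = a then propagating along Ps
   gives t'[w] = ti[w], while propagating along the R-free path from u_R to w
   (on which r and r' coincide) gives t'[w] = t[w], a contradiction.  Since t
   itself is not in Q^f(r') (it would give t[w] = ti[w] the same way),
   Q^f(r') ⊊ Q^f(r), contradicting frugality. *)

Definition functional_on {Rel D : Type} (J1 J2 : instance Rel D) (p : list Rel) : Prop :=
  forall S, In S p -> forall a b b', J1 S a b -> J2 S a b' -> b = b'.

Lemma path_propagation {Rel V D : Type} (u v : Rel -> V) (J1 J2 : instance Rel D)
  (p : list Rel) :
  functional_on J1 J2 p ->
  forall x y, dpath u v x y p ->
  forall t1 t2 : V -> D,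
  (forall S, In S p -> J1 S (t1 (u S)) (t1 (v S))) ->
  (forall S, In S p -> J2 S (t2 (u S)) (t2 (v S))) ->
  t1 x = t2 x -> t1 y = t2 y.
Proof.
  induction p as [|e p IH]; simpl; intros Hfun x y Hp t1 t2 A1 A2 Hx.
  - subst; exact Hx.
  - destruct Hp as [<- Hp].
    apply (IH (fun S HS => Hfun S (or_intror HS)) (v e) y Hp t1 t2);
      auto.
    apply (Hfun e (or_introl eq_refl) (t1 (u e))); [apply A1; auto|].
    rewrite Hx. apply A2; auto.
Qed.

Lemma functional_on_sub {Rel D : Type} (I J1 J2 : instance Rel D) (p : list Rel) :
  sub_inst J1 I -> sub_inst J2 I ->
  (forall S, In S p -> key_consistent I S) -> functional_on J1 J2 p.
Proof.
  intros H1 H2 Hc S HS a b b' A B. apply (Hc S HS a); auto.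
Qed.

Section Swap.
Context {Rel D : Type} (R : Rel) (a c : D).

Definition swap (J : instance Rel D) : instance Rel D :=
  fun S x y => (S = R /\ x = a /\ y = c) \/ (~ (S = R /\ x = a) /\ J S x y).

Lemma swap_off (J : instance Rel D) S x y :
  ~ (S = R /\ x = a) -> swap J S x y <-> J S x y.
Proof.
  unfold swap; intros N; split.
  - intros [[-> [-> _]] | [_ H]]; [exfalso; auto | exact H].
  - intros H; right; auto.
Qed.

Lemma swap_block (J : instance Rel D) y : swap J R a y -> y = c.
Proof.
  intros [[_ [_ E]] | [N _]]; [exact E | exfalso; auto].
Qed.

Lemma swap_sub (J I : instance Rel D) :
  sub_inst J I -> I R a c -> sub_inst (swap J) I.
Proof.
  intros Hs Hc S x y [[-> [-> ->]] | [_ H]]; auto.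
Qed.

Lemma swap_consistent (J : instance Rel D) :
  consistent_inst J -> consistent_inst (swap J).
Proof.
  intros Hc S x y y' [[E1 [E2 E3]] | [N H]] [[E1' [E2' E3']] | [N' H']];
    subst; auto; try (exfalso; auto; fail).
  eapply Hc; eauto.
Qed.

Lemma swap_sub_self (J : instance Rel D) :
  consistent_inst J -> J R a c -> sub_inst J (swap J).
Proof.
  intros Hc Hac S x y H.
  destruct (classic (S = R /\ x = a)) as [[-> ->] | N].
  - left. repeat split. eapply Hc; eauto.
  - right; auto.
Qed.

Lemma swap_mono (J1 J2 : instance Rel D) :
  sub_inst J1 J2 -> sub_inst (swap J1) (swap J2).
Proof.
  intros H S x y [E | [N A]]; [left; exact E | right; auto].
Qed.
End Swap.

Lemma swap_swap {Rel D : Type} (R : Rel) (a c c' : D) (J : instance Rel D) :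
  sub_inst (swap R a c J) (swap R a c (swap R a c' J)).
Proof.
  intros S x y [E | [N A]]; [left; exact E | right; split; [exact N | right; auto]].
Qed.

Lemma sub_trans {Rel D : Type} {J1 J2 J3 : instance Rel D} :
  sub_inst J1 J2 -> sub_inst J2 J3 -> sub_inst J1 J3.
Proof. intros H12 H23 S x y H. auto. Qed.

(* Maximality of the new repair
   r' is reduced to maximality of r by swapping any consistent extension of
   r' back. *)
Lemma swap_repair {Rel D : Type} (I r : instance Rel D) (R : Rel) (a c c' : D) :
  is_repair I r -> r R a c -> I R a c' -> is_repair I (swap R a c' r).
Proof.
  intros [Hsub [Hcons Hmax]] Hc Hc'.
  split; [apply swap_sub; auto | split; [apply swap_consistent; auto |]].
  intros r'' Hs Hs2 Hc2.
  assert (Hr''c' : r'' R a c').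
  { apply Hs. left; auto. }
  assert (Hback : sub_inst (swap R a c r'') r).
  { apply Hmax; [| apply swap_sub; auto | apply swap_consistent; auto].
    apply (sub_trans (swap_sub_self R a c r Hcons Hc)).
    apply (sub_trans (swap_swap R a c c' r)).
    apply swap_mono; exact Hs. }
  apply (sub_trans (swap_sub_self R a c' r'' Hc2 Hr''c')).
  apply (sub_trans (swap_swap R a c' c r'')).
  apply swap_mono; exact Hback.
Qed.

Lemma Qf_swap_off {Rel V D : Type} (u v : Rel -> V) (J : instance Rel D)
  (R : Rel) (a c : D) (t : V -> D) :
  Qf u v (swap R a c J) t -> t (u R) <> a -> Qf u v J t.
Proof.
  intros Ht Ha S. apply (swap_off R a c J S); [| apply Ht].
  intros [-> E]. contradiction.
Qed.

Lemma Qf_swap_block {Rel V D : Type} (u v : Rel -> V) (J : instance Rel D)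
  (R : Rel) (a c : D) (t : V -> D) :
  Qf u v (swap R a c J) t -> t (u R) = a -> t (v R) = c.
Proof.
  intros Ht Ha. apply (swap_block R a c J). specialize (Ht R). rewrite Ha in Ht.
  exact Ht.
Qed.

Lemma functional_on_swap {Rel D : Type} (J : instance Rel D) (R : Rel) (a c : D)
  (p : list Rel) :
  consistent_inst J -> ~ In R p -> functional_on (swap R a c J) J p.
Proof.
  intros Hc HnR S HS x y y' A B.
  apply (swap_off R a c J S) in A; [eapply Hc; eauto |].
  intros [-> _]. contradiction.
Qed.

Lemma proj_Pf_avoid {Rel V D : Type} (u v : Rel -> V) (P : list Rel)
  (I : instance Rel D) (x y : V) (a b1 b2 d : D) :
  proj_Pf u v P I x y a b1 -> proj_Pf u v P I x y a b2 -> b1 <> b2 ->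
  exists b, proj_Pf u v P I x y a b /\ b <> d.
Proof.
  intros H1 H2 Hne.
  destruct (classic (b1 = d)) as [-> | N]; [exists b2 | exists b1]; auto.
Qed.

Theorem lemma5p8
  (Rel V D : Type) (u v : Rel -> V) (cons : Rel -> bool)
  (Hfin_rel : exists l : list Rel, forall R, In R l)
  (Hvars : forall x : V, exists R, u R = x \/ v R = x)
  (Huv : forall R, u R <> v R)
  (I : instance Rel D) (HIfin : finite_inst I)
  (HIcons : forall R, cons R = true -> key_consistent I R)
  (R : Rel) (HR : cons R = false)
  (w : V)
  (Hplus : exists p, dpath u v (u R) w p /\ ~ In R p)
  (Hoplus : exists p, dpath u v (v R) w p /\ (forall S, In S p -> cons S = true))
  (Ps : list Rel)
  (HP : dpath u v (v R) w Ps)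
  (HPc : forall S, In S Ps -> cons S = true)
  (HPsimple : NoDup (u R :: v R :: map v Ps))
  (a b1 b2 : D)
  (H1 : proj_Pf u v (R :: Ps) I (u R) w a b1)
  (H2 : proj_Pf u v (R :: Ps) I (u R) w a b2)
  (Hne : b1 <> b2) :
  forall r : instance Rel D, frugal u v I r ->
    ~ (exists t : V -> D, Qf u v r t /\ t (u R) = a).
Proof.
  intros r [Hrep Hmin] [t [Ht Hta]].
  destruct Hrep as [Hsub [Hcons Hmax]].
  destruct (proj_Pf_avoid _ _ _ _ _ _ _ _ _ (t w) H1 H2 Hne)
    as [b [[ti [Hti [Htia Htib]]] Hbt]].
  set (c' := ti (v R)).
  assert (HIc' : I R a c').
  { rewrite <- Htia. apply Hti. left; reflexivity. }
  (* Along the consistent path Ps, t'[v_R] = c' forces t'[w] = ti[w]. *)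
  assert (Hprop : forall (J : instance Rel D) (t' : V -> D),
            sub_inst J I -> Qf u v J t' -> t' (v R) = c' -> t' w = b).
  { intros J t' HJ Ht' Hc'. rewrite <- Htib.
    apply (path_propagation u v J I Ps) with (x := v R); auto.
    - apply (functional_on_sub I); [exact HJ | intros S x y; auto |].
      intros S HS. apply HIcons, HPc, HS.
    - intros S HS. apply Hti. right; exact HS. }
  set (r' := swap R a c' r).
  apply Hmin. exists r'. split; [| split].
  - apply (swap_repair I r R a (t (v R)) c'); [split; auto | | exact HIc'].
    rewrite <- Hta. apply Ht.
  - intros t' Ht'.
    destruct (classic (t' (u R) = a)) as [Ea | Na];
      [exfalso | exact (Qf_swap_off u v r R a c' t' Ht' Na)].
    assert (Htw' : t' w = b).
    { apply (Hprop r' t'); [apply swap_sub; auto | exact Ht' |].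
      exact (Qf_swap_block u v r R a c' t' Ht' Ea). }
    (* Along the R-free path from u_R to w, r' and r agree. *)
    destruct Hplus as [p [Hp HnR]].
    assert (Htw : t' w = t w).
    { apply (path_propagation u v r' r p (functional_on_swap r R a c' p Hcons HnR)
               (u R) w Hp t' t); auto; congruence. }
    congruence.
  - exists t. split; [exact Ht |]. intros Ht'.
    apply Hbt. symmetry. apply (Hprop r' t); [apply swap_sub; auto | exact Ht' |].
    exact (Qf_swap_block u v r R a c' t Ht' Hta).
Qed.
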